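(* Each of the logics $\mathbf{PD}$, $\mathsf{InqL}$ and $\mathbf{PT}$ is $\mathcal{F}$-structurally complete, where $\mathcal{F}$ is the class of all flat substitutions: for every such logic $\mathsf{L}$ and all formulas $\phi,\psi$ in the language of $\mathsf{L}$, if for every flat substitution $\sigma$ of $\mathsf{L}$, $\vdash_{\mathsf{L}}\sigma(\phi)$ implies $\vdash_{\mathsf{L}}\sigma(\psi)$, then $\phi\vdash_{\mathsf{L}}\psi$.
   Context: Fix a countably infinite set Prop of propositional variables. A valuation is a function $v:\mathrm{Prop}\to\{0,1\}$; a team is a set of valuations. Formulas of the extended propositional downwards closed team logic $\mathbf{PT}$ are given by $\phi::=p\mid\bot\mid\top\mid\,=\!(\phi_1,\dots,\phi_n,\phi)\mid\neg\phi\mid\phi\wedge\phi\mid\phi\otimes\phi\mid\phi\vee\phi\mid\phi\to\phi$ ($p\in\mathrm{Prop}$). Satisfaction of a formula on a team $X$: $X\models p$ iff $v(p)=1$ for all $v\in X$; $X\models\bot$ iff $X=\emptyset$; $X\models\top$ always; $X\models\phi\wedge\psi$ iff $X\models\phi$ and $X\models\psi$; $X\models\phi\otimes\psi$ iff $X=Y\cup Z$ for some $Y,Z\subseteq X$ with $Y\models\phi$, $Z\models\psi$; $X\models\phi\vee\psi$ iff $X\models\phi$ or $X\models\psi$; $X\models\phi\to\psi$ iff for every $Y\subseteq X$, $Y\models\phi$ implies $Y\models\psi$; $X\models\neg\phi$ iff $\{v\}\not\models\phi$ for all $v\in X$ (equivalently $X\models\phi\to\bot$); $X\models\,=\!(\phi_1,\dots,\phi_n,\psi)$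 iff $X\models\bigwedge_{i=1}^n(\phi_i\vee(\phi_i\to\bot))\to(\psi\vee(\psi\to\bot))$. A formula $\phi$ is flat if for every team $X$: $X\models\phi$ iff $\{v\}\models\phi$ for all $v\in X$. Formulas of the extended propositional dependence logic $\mathbf{PD}$ are given by $\phi::=p\mid\bot\mid\top\mid\,=\!(\alpha_1,\dots,\alpha_k,\beta)\mid\neg\phi\mid\phi\wedge\phi\mid\phi\otimes\phi$ where $\alpha_i,\beta$ are flat formulas of $\mathbf{PD}$; they are evaluated by the same clauses, where for flat arguments the dependence clause is equivalent to: $X\models\,=\!(\vec\alpha,\beta)$ iff for all $v,v'\in X$, if $\{v\}\models\alpha_i\Leftrightarrow\{v'\}\models\alpha_i$ for every $i$, then $\{v\}\models\beta\Leftrightarrow\{v'\}\models\beta$. Formulas of propositional inquisitive logic $\mathsf{InqL}$ are built from $p,\bot,\top$ using $\wedge,\vee,\to$ with the same clauses ($\neg\phi$ abbreviates $\phi\to\bot$). For finite $\Gamma$, $\Gamma\models\phi$ means every team satisfying all formulas of $\Gamma$ satisfies $\phi$; for $\mathsf{L}\in\{\mathbf{PD},\mathsf{InqL},\mathbf{PT}\}$, $\Gamma\vdash_{\mathsf{L}}\phi$ iff $\phi$ and all members of $\Gamma$ are in the language of $\mathsf{L}$ and $\Gamma\models\phi$; $\vdash_{\mathsf L}\phi$ means $\emptyset\vdash_{\mathsf L}\phi$. A substitution of $\mathsf{L}$ is a map from formulas of $\mathsf{L}$ to formulas of $\mathsf{L}$ commuting with all connectives and atoms (so $\sigma(\bot)=\bot$,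 $\sigma(\top)=\top$, $\sigma(\neg\phi)=\neg\sigma(\phi)$, $\sigma(\phi\circ\psi)=\sigma(\phi)\circ\sigma(\psi)$, $\sigma(=\!(\vec\phi,\psi))=\,=\!(\sigma(\vec\phi),\sigma(\psi))$); it is flat if $\sigma(p)$ is flat for every $p\in\mathrm{Prop}$. *)

From Stdlib Require Import List.
Import ListNotations.
Set Implicit Arguments.

Definition valuation := nat -> bool.
Definition team := valuation -> Prop.

Definition subteam (Y X : team) : Prop := forall v, Y v -> X v.
Definition empty_team (X : team) : Prop := forall v, ~ X v.
Definition singleton (v : valuation) : team := fun w => w = v.

(* Formulas of PT; [Dep l g] is the dependence atom =(l_1,...,l_n, g). *)
Inductive form : Type :=
| Var  : nat -> form
| Bot  : form
| Top  : form
| Dep  : list form -> form -> form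
| Neg  : form -> form
| And  : form -> form -> form
| Tens : form -> form -> form
| Or   : form -> form -> form
| Imp  : form -> form -> form.

Fixpoint sat (X : team) (f : form) {struct f} : Prop :=
  match f with
  | Var p => forall v, X v -> v p = true
  | Bot => empty_team X
  | Top => True
  | Dep l g =>
      (* X |= /\_i (l_i \/ (l_i -> Bot)) -> (g \/ (g -> Bot)) *)
      forall Y, subteam Y X ->
        (fix allc (l : list form) : Prop :=
           match l with
           | [] => True
           | h :: t =>
               (sat Y h \/ (forall Z, subteam Z Y -> sat Z h -> empty_team Z))
               /\ allc t
           end) l ->
        (sat Y g \/ (forall Z, subteam Z Y -> sat Z g -> empty_team Z))
  | Neg g => forall v, X v -> ~ sat (singleton v) g
  | And g h => sat X g /\ sat X h
  | Tens g h => exists Y Z, subteam Y X /\ subteam Z X /\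
                  (forall v, X v -> Y v \/ Z v) /\ sat Y g /\ sat Z h
  | Or g h => sat X g \/ sat X h
  | Imp g h => forall Y, subteam Y X -> sat Y g -> sat Y h
  end.

Definition flat (f : form) : Prop :=
  forall X, sat X f <-> (forall v, X v -> sat (singleton v) f).

Fixpoint inPD (f : form) : Prop :=
  match f with
  | Var _ | Bot | Top => True
  | Dep l g =>
      (fix allc (l : list form) : Prop :=
         match l with
         | [] => True
         | h :: t => (inPD h /\ flat h) /\ allc t
         end) l /\ (inPD g /\ flat g)
  | Neg g => inPD g
  | And g h | Tens g h => inPD g /\ inPD h
  | Or _ _ | Imp _ _ => False
  end.

(* Language of InqL: p, Bot, Top, And, Or, Imp (negation is an abbreviation). *)
Fixpoint inInqL (f : form) : Prop :=
  match f with
  | Var _ | Bot | Top => True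
  | And g h | Or g h | Imp g h => inInqL g /\ inInqL h
  | _ => False
  end.

Inductive logic : Type := PD | InqL | PT.

Definition inL (L : logic) (f : form) : Prop :=
  match L with
  | PD => inPD f
  | InqL => inInqL f
  | PT => True
  end.

Fixpoint subst (s : nat -> form) (f : form) : form :=
  match f with
  | Var p => s p
  | Bot => Bot
  | Top => Top
  | Dep l g => Dep (map (subst s) l) (subst s g)
  | Neg g => Neg (subst s g)
  | And g h => And (subst s g) (subst s h)
  | Tens g h => Tens (subst s g) (subst s h)
  | Or g h => Or (subst s g) (subst s h)
  | Imp g h => Imp (subst s g) (subst s h)
  end.

Definition subst_of (L : logic) (s : nat -> form) : Prop :=
  forall f, inL L f -> inL L (subst s f).

Definition flat_subst (L : logic) (s : nat -> form) : Prop :=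
  subst_of L s /\ forall p, flat (s p).

Definition entails (f g : form) : Prop := forall X, sat X f -> sat X g.
Definition valid (f : form) : Prop := forall X, sat X f.

Definition derivesL (L : logic) (f g : form) : Prop :=
  inL L f /\ inL L g /\ entails f g.
Definition provableL (L : logic) (f : form) : Prop :=
  inL L f /\ valid f.

From Stdlib Require Import List Classical ClassicalEpsilon FunctionalExtensionality
  PropExtensionality Lia Arith Bool.
Import ListNotations.

(* Suppose X |= phi but not X |= psi. Only the variables below some bound K
   occur in phi and psi, so X may be replaced by its truncation Z to these
   variables. A flat substitution s acts semantically: Y |= s(chi) iff
   h[Y] |= chi, where h w p records whether w satisfies s(p). Z is defined by
   a flat formula M of the logic (a disjunction of conjunctions of literals),
   and s(p) := (M /\ p) \/ (~M /\ x0 p) for a fixed x0 in X makes h a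
   retraction onto Z: it truncates valuations whose truncation lies in Z and
   sends all others to the truncation of x0. Hence every h[Y] is a subteam of
   Z, so s(phi) is valid by downward closure; then s(psi) is valid, and as the
   image of the full team contains Z, Z |= psi, a contradiction. *)

Definition form_nested_ind (P : form -> Prop)
  (HV : forall n, P (Var n)) (HB : P Bot) (HT : P Top)
  (HD : forall l g, Forall P l -> P g -> P (Dep l g))
  (HN : forall g, P g -> P (Neg g))
  (HA : forall g h, P g -> P h -> P (And g h))
  (HTs : forall g h, P g -> P h -> P (Tens g h))
  (HO : forall g h, P g -> P h -> P (Or g h))
  (HI : forall g h, P g -> P h -> P (Imp g h)) : forall f, P f :=
  fix F (f : form) : P f :=
    match f as f0 return P f0 with
    | Var n => HV n | Bot => HB | Top => HT
    | Dep l g => HD l g ((fix G (l : list form) : Forall P l :=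
         match l as l0 return Forall P l0 with
         | [] => Forall_nil P
         | h :: t => @Forall_cons _ P h t (F h) (G t) end) l) (F g)
    | Neg g => HN g (F g)
    | And g h => HA g h (F g) (F h)
    | Tens g h => HTs g h (F g) (F h)
    | Or g h => HO g h (F g) (F h)
    | Imp g h => HI g h (F g) (F h)
    end.

Definition img (h : valuation -> valuation) (Y : team) : team :=
  fun v => exists w, Y w /\ h w = v.

Definition restrict (h : valuation -> valuation) (Y Z : team) : team :=
  fun w => Y w /\ Z (h w).

Lemma img_restrict h Y Z : subteam Z (img h Y) -> img h (restrict h Y Z) = Z.
Proof.
  intros HZ. apply functional_extensionality; intro v.
  apply propositional_extensionality. split.
  - intros [w [[_ Hw] <-]]; exact Hw.
  - intros Hv. destruct (HZ v Hv) as [w [Yw <-]]. exists w; split; [split|]; auto.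
Qed.

Lemma img_subteam h Y Y' : subteam Y' Y -> subteam (img h Y') (img h Y).
Proof. intros H v [w [Hw <-]]; exists w; auto. Qed.

Lemma restrict_subteam h Y Z : subteam (restrict h Y Z) Y.
Proof. intros w [Hw _]; exact Hw. Qed.

Lemma img_singleton h w : img h (singleton w) = singleton (h w).
Proof.
  apply functional_extensionality; intro v. apply propositional_extensionality.
  unfold img, singleton; split.
  - intros [u [-> <-]]; reflexivity.
  - intros ->; exists w; auto.
Qed.

Lemma empty_img h Y : empty_team (img h Y) <-> empty_team Y.
Proof.
  split.
  - intros H w Hw. apply (H (h w)). exists w; auto.
  - intros H v [w [Hw _]]. exact (H w Hw).
Qed.

(* Every subteam of [img h Y] is the image of a subteam of [Y], namely its
   restriction; this is what lets both team quantifiers commute with [img h]. *)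
Lemma forall_subteam_img h (A B A' B' : team -> Prop) :
  (forall Y, A Y <-> A' (img h Y)) -> (forall Y, B Y <-> B' (img h Y)) ->
  forall Y, (forall Y', subteam Y' Y -> A Y' -> B Y') <->
            (forall Z, subteam Z (img h Y) -> A' Z -> B' Z).
Proof.
  intros HA HB Y; split.
  - intros H Z HZ HAZ.
    pose proof (HA (restrict h Y Z)) as HA1. pose proof (HB (restrict h Y Z)) as HB1.
    rewrite img_restrict in HA1, HB1 by exact HZ.
    apply HB1, H; [apply restrict_subteam | apply HA1; exact HAZ].
  - intros H Y' HY' HAY. apply HB, H; [apply img_subteam; exact HY' | apply HA; exact HAY].
Qed.

Lemma split_img h (A B A' B' : team -> Prop) :
  (forall Y, A Y <-> A' (img h Y)) -> (forall Y, B Y <-> B' (img h Y)) ->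
  forall Y,
    (exists Y1 Y2, subteam Y1 Y /\ subteam Y2 Y /\
       (forall v, Y v -> Y1 v \/ Y2 v) /\ A Y1 /\ B Y2) <->
    (exists Z1 Z2, subteam Z1 (img h Y) /\ subteam Z2 (img h Y) /\
       (forall v, img h Y v -> Z1 v \/ Z2 v) /\ A' Z1 /\ B' Z2).
Proof.
  intros HA HB Y; split.
  - intros [Y1 [Y2 [H1 [H2 [Hcov [HA1 HB2]]]]]].
    exists (img h Y1), (img h Y2). repeat split.
    + apply img_subteam; exact H1.
    + apply img_subteam; exact H2.
    + intros v [w [Hw <-]]. destruct (Hcov w Hw); [left|right]; exists w; auto.
    + apply HA; exact HA1.
    + apply HB; exact HB2.
  - intros [Z1 [Z2 [H1 [H2 [Hcov [HA1 HB2]]]]]].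
    exists (restrict h Y Z1), (restrict h Y Z2). repeat split.
    + apply restrict_subteam.
    + apply restrict_subteam.
    + intros w Hw. destruct (Hcov (h w)) as [Z|Z]; [exists w; auto | left | right];
        split; assumption.
    + rewrite HA, img_restrict; assumption.
    + rewrite HB, img_restrict; assumption.
Qed.

Definition decided (Y : team) (a : form) : Prop :=
  sat Y a \/ (forall Z, subteam Z Y -> sat Z a -> empty_team Z).

Definition all_decided (Y : team) : list form -> Prop :=
  fix all_decided (l : list form) : Prop :=
    match l with
    | [] => True
    | a :: l => decided Y a /\ all_decided l
    end.

Lemma sat_Dep X l g :
  sat X (Dep l g) <-> forall Y, subteam Y X -> all_decided Y l -> decided Y g.
Proof. reflexivity. Qed.

Lemma decided_img h a b : (forall Y, sat Y b <-> sat (img h Y) a) ->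
  forall Y, decided Y b <-> decided (img h Y) a.
Proof.
  intros Hab Y. unfold decided.
  rewrite Hab, (forall_subteam_img h (fun Z => sat Z b) empty_team
     (fun Z => sat Z a) empty_team Hab (fun Z => iff_sym (empty_img h Z)) Y).
  reflexivity.
Qed.

Lemma all_decided_img h (f : form -> form) l :
  Forall (fun a => forall Y, sat Y (f a) <-> sat (img h Y) a) l ->
  forall Y, all_decided Y (map f l) <-> all_decided (img h Y) l.
Proof.
  intros Hl Y. induction Hl as [|a l Ha _ IHl]; simpl; [reflexivity|].
  rewrite (decided_img h a (f a) Ha Y), IHl. reflexivity.
Qed.

Lemma sat_subst_img (s : nat -> form) (h : valuation -> valuation)
  (Hs : forall p, flat (s p))
  (Hh : forall w p, sat (singleton w) (s p) <-> h w p = true) :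
  forall f Y, sat Y (subst s f) <-> sat (img h Y) f.
Proof.
  induction f using form_nested_ind; intro Y.
  - simpl. rewrite (Hs n Y). split.
    + intros H v [w [Hw <-]]. apply Hh, H, Hw.
    + intros H w Hw. apply Hh, H. exists w; auto.
  - symmetry; apply empty_img.
  - simpl; tauto.
  - change (sat Y (Dep (map (subst s) l) (subst s f)) <-> sat (img h Y) (Dep l f)).
    rewrite !sat_Dep. apply forall_subteam_img.
    + apply all_decided_img; assumption.
    + apply decided_img; exact IHf.
  - simpl. split.
    + intros H v [w [Hw <-]]. rewrite <- img_singleton, <- IHf. apply H, Hw.
    + intros H w Hw. rewrite IHf, img_singleton. apply H. exists w; auto.
  - simpl. rewrite IHf1, IHf2. reflexivity.
  - apply split_img; assumption.
  - simpl. rewrite IHf1, IHf2. reflexivity.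
  - apply forall_subteam_img; assumption.
Qed.

Lemma sat_subteam : forall f X Y, sat X f -> subteam Y X -> sat Y f.
Proof.
  induction f; intros X Y HX HY; simpl in *.
  - intros v Hv; apply HX, HY, Hv.
  - intros v Hv; apply (HX v), HY, Hv.
  - exact I.
  - intros Z HZ. apply HX. intros v Hv; apply HY, HZ, Hv.
  - intros v Hv; apply HX, HY, Hv.
  - destruct HX; split; eauto.
  - destruct HX as [Y1 [Z1 [H1 [H2 [H3 [H4 H5]]]]]].
    exists (fun v => Y1 v /\ Y v), (fun v => Z1 v /\ Y v). repeat split.
    + intros v [_ Hv]; exact Hv.
    + intros v [_ Hv]; exact Hv.
    + intros v Hv. destruct (H3 v (HY v Hv)); [left|right]; auto.
    + apply (IHf1 Y1); auto. intros v [Hv _]; exact Hv.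
    + apply (IHf2 Z1); auto. intros v [Hv _]; exact Hv.
  - destruct HX; [left|right]; eauto.
  - intros Z HZ. apply HX. intros v Hv; apply HY, HZ, Hv.
Qed.

Lemma sat_empty_team : forall f X, empty_team X -> sat X f.
Proof.
  induction f; intros X HX; simpl in *.
  - intros v Hv; destruct (HX v Hv).
  - exact HX.
  - exact I.
  - intros Y HY _. left. apply IHf. intros v Hv; apply (HX v), HY, Hv.
  - intros v Hv; destruct (HX v Hv).
  - auto.
  - exists X, X. repeat split; auto; intros v Hv; auto.
  - left; auto.
  - intros Y HY _. apply IHf2. intros v Hv; apply (HX v), HY, Hv.
Qed.

Definition subst_valuation (s : nat -> form) (w : valuation) : valuation :=
  fun p => if excluded_middle_informative (sat (singleton w) (s p)) then true else false.

Lemma subst_valuation_spec s w p :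
  sat (singleton w) (s p) <-> subst_valuation s w p = true.
Proof.
  unfold subst_valuation. destruct excluded_middle_informative; split; auto; discriminate.
Qed.

Lemma sat_subst s : (forall p, flat (s p)) ->
  forall f Y, sat Y (subst s f) <-> sat (img (subst_valuation s) Y) f.
Proof. intros Hs; exact (sat_subst_img s _ Hs (subst_valuation_spec s)). Qed.

Lemma flat_subst_flat s : (forall p, flat (s p)) -> forall f, flat f -> flat (subst s f).
Proof.
  intros Hs f Hf X. rewrite (sat_subst s Hs), (Hf (img (subst_valuation s) X)). split.
  - intros H w Hw. rewrite (sat_subst s Hs), img_singleton. apply H. exists w; auto.
  - intros H v [w [Hw <-]]. rewrite <- img_singleton, <- (sat_subst s Hs). apply H, Hw.
Qed.

Fixpoint all_inPD_flat (l : list form) : Prop :=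
  match l with [] => True | a :: l => (inPD a /\ flat a) /\ all_inPD_flat l end.

Lemma subst_of_flat L s : (forall p, inL L (s p) /\ flat (s p)) -> subst_of L s.
Proof.
  intros Hs. assert (Hfl : forall p, flat (s p)) by (intro p; apply Hs).
  destruct L; intros f Hf; simpl in *.
  - revert Hf. induction f using form_nested_ind; simpl; intros Hf; try tauto.
    + apply (Hs n).
    + change (all_inPD_flat (map (subst s) l) /\ inPD (subst s f) /\ flat (subst s f)).
      change (all_inPD_flat l /\ inPD f /\ flat f) in Hf. destruct Hf as [Hl [Hg Hfg]].
      split; [|split; [auto | apply flat_subst_flat; assumption]].
      clear Hg Hfg IHf. induction H as [|a l Ha _ IHl]; simpl in *; auto.
      destruct Hl as [[Hia Hfa] Hl].
      split; [split; [auto | apply flat_subst_flat; assumption] | auto].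
  - revert Hf. induction f; simpl; intros Hf; try tauto. apply (Hs n).
  - exact I.
Qed.

Definition fixes_below (K : nat) (s : nat -> form) : Prop :=
  forall p, p < K -> s p = Var p.

Lemma fixes_below_mono K K' s : K <= K' -> fixes_below K' s -> fixes_below K s.
Proof. intros HK Hs p Hp; apply Hs; lia. Qed.

Lemma subst_fixed_bound :
  forall f, exists K, forall s, fixes_below K s -> subst s f = f.
Proof.
  assert (Hmax : forall K1 K2 s, fixes_below (max K1 K2) s ->
            fixes_below K1 s /\ fixes_below K2 s).
  { intros K1 K2 s Hs; split; apply (fixes_below_mono _ (max K1 K2)); auto; lia. }
  induction f using form_nested_ind.
  6-9: destruct IHf1 as [K1 H1], IHf2 as [K2 H2]; exists (max K1 K2);
    intros s Hs; apply Hmax in Hs as [Hs1 Hs2]; simpl; rewrite H1, H2; auto.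
  - exists (S n); intros s H; apply H; lia.
  - exists 0; reflexivity.
  - exists 0; reflexivity.
  - destruct IHf as [K HK].
    assert (exists K', forall s, fixes_below K' s -> map (subst s) l = l) as [K' HK'].
    { induction H as [|a l [Ka Ha] _ [Kl Hl]]; [exists 0; reflexivity|].
      exists (max Ka Kl). intros s Hs; apply Hmax in Hs as [Hsa Hsl]; simpl.
      rewrite Ha, Hl; auto. }
    exists (max K K'). intros s Hs; apply Hmax in Hs as [Hs Hs']; simpl.
    rewrite HK, HK'; auto.
  - destruct IHf as [K HK]. exists K; intros s Hs; simpl; rewrite HK; auto.
Qed.

Definition defines L M (P : valuation -> Prop) :=
  inL L M /\ forall X, sat X M <-> (forall v, X v -> P v).

Section Definability.

Variable L : logic.

Lemma defines_singleton M P w : defines L M P -> (sat (singleton w) M <-> P w).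
Proof.
  intros [_ H]. rewrite H. unfold singleton.
  split; [intro A; apply A; reflexivity | intros A v ->; exact A].
Qed.

Lemma defines_flat M P : defines L M P -> flat M.
Proof.
  intros G X. pose proof G as [_ H]. rewrite H.
  split; intros A v Hv; apply (defines_singleton _ _ v G), A, Hv.
Qed.

Lemma defines_ext M P Q : defines L M P -> (forall w, P w <-> Q w) -> defines L M Q.
Proof.
  intros [HL H] E. split; auto. intro X. rewrite H. split; intros A v Hv; apply E, A, Hv.
Qed.

Lemma defines_Var p : defines L (Var p) (fun w => w p = true).
Proof. split; [destruct L; exact I | reflexivity]. Qed.

Lemma defines_Top : defines L Top (fun _ => True).
Proof. split; [destruct L; exact I | simpl; tauto]. Qed.

Lemma defines_Bot : defines L Bot (fun _ => False).
Proof. split; [destruct L; exact I | simpl; unfold empty_team; firstorder]. Qed.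

Lemma defines_bool (b : bool) : defines L (if b then Top else Bot) (fun _ => b = true).
Proof.
  destruct b; [eapply defines_ext; [apply defines_Top|] | eapply defines_ext; [apply defines_Bot|]];
    simpl; intuition discriminate.
Qed.

Lemma defines_And a b P Q :
  defines L a P -> defines L b Q -> defines L (And a b) (fun w => P w /\ Q w).
Proof.
  intros [La Ha] [Lb Hb]. split.
  - destruct L; simpl in *; tauto.
  - intro X; simpl. rewrite Ha, Hb. firstorder.
Qed.

(* InqL has no primitive negation; there it is the abbreviation a -> Bot. *)
Definition negL a := match L with InqL => Imp a Bot | _ => Neg a end.

Lemma defines_neg a P : defines L a P -> defines L (negL a) (fun w => ~ P w).
Proof.
  intros G. pose proof (defines_singleton a P) as S. destruct G as [La Ha]. split.
  - unfold negL; destruct L; simpl in *; tauto.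
  - intro X. unfold negL; destruct L; simpl.
    1,3: split; intros A v Hv; [rewrite <- S | rewrite S]; auto; split; auto.
    split.
    + intros A v Hv Pv. refine (A (singleton v) _ _ v eq_refl).
      * intros u ->; exact Hv.
      * apply Ha. intros u ->; exact Pv.
    + intros A Y HY SY u Yu. rewrite Ha in SY. apply (A u (HY u Yu)), SY, Yu.
Qed.

(* A disjunction of flat formulas available in all three logics: PD lacks [Or]
   and InqL lacks [Tens]. *)
Definition disjL a b := negL (And (negL a) (negL b)).

Lemma defines_disj a b P Q :
  defines L a P -> defines L b Q -> defines L (disjL a b) (fun w => P w \/ Q w).
Proof.
  intros Ga Gb. eapply defines_ext.
  - apply defines_neg, defines_And; apply defines_neg; eauto.
  - intro w. destruct (classic (P w)); tauto.
Qed.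

Definition agree_below (k : nat) (x w : valuation) : Prop :=
  forall p, p < k -> x p = w p.

Lemma defines_agree_below :
  forall k (T : team), exists M, defines L M (fun w => exists x, T x /\ agree_below k x w).
Proof.
  induction k; intro T.
  - destruct (classic (exists x, T x)) as [[x Hx]|Hn].
    + exists Top. eapply defines_ext; [apply defines_Top|]. intro w; split; [|tauto].
      intros _; exists x; split; [exact Hx | intros p Hp; lia].
    + exists Bot. eapply defines_ext; [apply defines_Bot|]. intro w; split; [tauto|].
      intros [x [Hx _]]; apply Hn; eauto.
  - destruct (IHk (fun x => T x /\ x k = true)) as [M1 H1].
    destruct (IHk (fun x => T x /\ x k = false)) as [M0 H0].
    exists (disjL (And (Var k) M1) (And (negL (Var k)) M0)).
    eapply defines_ext.
    + apply defines_disj; apply defines_And;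
        [apply defines_Var | exact H1 | apply defines_neg, defines_Var | exact H0].
    + intro w. split.
      * intros [[Hk [x [[Tx Xk] Ag]]]|[Hk [x [[Tx Xk] Ag]]]]; exists x; split; auto;
          intros p Hp; (assert (p < k \/ p = k) as [|] by lia; [auto | subst p]).
        -- congruence.
        -- destruct (w k); congruence.
      * intros [x [Tx Ag]]. destruct (w k) eqn:E.
        -- left; split; [reflexivity|]. exists x; split; [split|]; auto.
           ++ rewrite Ag; auto.
           ++ intros p Hp; apply Ag; lia.
        -- right; split; [simpl; congruence|]. exists x; split; [split|]; auto.
           ++ rewrite Ag; auto.
           ++ intros p Hp; apply Ag; lia.
Qed.

End Definability.

Definition trunc (K : nat) (x : valuation) : valuation :=
  fun p => if p <? K then x p else false.

Lemma trunc_below K x p : p < K -> trunc K x p = x p.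
Proof. intros Hp; unfold trunc; destruct (Nat.ltb_spec p K); [reflexivity | lia]. Qed.

Lemma trunc_above K x p : K <= p -> trunc K x p = false.
Proof. intros Hp; unfold trunc; destruct (Nat.ltb_spec p K); [lia | reflexivity]. Qed.

Lemma trunc_agree K x w : agree_below K x w -> trunc K x = trunc K w.
Proof.
  intros Ag. apply functional_extensionality; intro p.
  destruct (Nat.lt_ge_cases p K); [rewrite !trunc_below | rewrite !trunc_above]; auto.
Qed.

Lemma agree_below_trunc K x : agree_below K x (trunc K x).
Proof. intros p Hp; rewrite trunc_below; auto. Qed.

Lemma sat_img_trunc K f : (forall s, fixes_below K s -> subst s f = f) ->
  forall X, sat (img (trunc K) X) f <-> sat X f.
Proof.
  intros Hf X.
  set (s := fun p => if p <? K then Var p else Bot).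
  assert (Hs : forall p, defines PT (s p) (fun w => trunc K w p = true)).
  { intro p; unfold s, trunc; destruct (p <? K); [apply defines_Var|].
    eapply defines_ext; [apply defines_Bot | intro; split; [tauto | discriminate]]. }
  rewrite <- (sat_subst_img s (trunc K) (fun p => defines_flat _ _ _ (Hs p))
                (fun w p => defines_singleton _ _ _ w (Hs p))).
  rewrite Hf; [reflexivity|].
  intros p Hp; unfold s; destruct (Nat.ltb_spec p K); [reflexivity | lia].
Qed.

Section Retraction.

Variables (L : logic) (K : nat) (X : team) (x0 : valuation) (M : form).
Hypothesis Hx0 : X x0.

Let mem (w : valuation) : Prop := exists x, X x /\ agree_below K x w.

Hypothesis HM : defines L M mem.

Definition retract_subst (p : nat) : form :=
  if p <? K then disjL L (And M (Var p)) (And (negL L M) (if x0 p then Top else Bot))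
  else Bot.

Lemma defines_retract_subst p : defines L (retract_subst p)
  (fun w => (mem w /\ trunc K w p = true) \/ (~ mem w /\ trunc K x0 p = true)).
Proof.
  unfold retract_subst. destruct (Nat.ltb_spec p K).
  - eapply defines_ext.
    + apply defines_disj; apply defines_And;
        [exact HM | apply defines_Var | apply defines_neg, HM | apply defines_bool].
    + intro w; rewrite !trunc_below by exact H; reflexivity.
  - eapply defines_ext; [apply defines_Bot|].
    intro w; rewrite !trunc_above by exact H; intuition discriminate.
Qed.

Lemma flat_subst_retract : flat_subst L retract_subst.
Proof.
  assert (D := defines_retract_subst).
  split; [apply subst_of_flat; intro p; split; [apply D | eapply defines_flat, D]|].
  intro p; eapply defines_flat, D.
Qed.

Lemma subst_valuation_retract w :
  subst_valuation retract_subst w = trunc K (if excluded_middle_informative (mem w) then w else x0).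
Proof.
  apply functional_extensionality; intro p. apply eq_iff_eq_true.
  rewrite <- subst_valuation_spec, (defines_singleton _ _ _ w (defines_retract_subst p)).
  destruct excluded_middle_informative; tauto.
Qed.

Lemma img_retract_subteam Y :
  subteam (img (subst_valuation retract_subst) Y) (img (trunc K) X).
Proof.
  intros v [w [_ <-]]. rewrite subst_valuation_retract.
  destruct excluded_middle_informative as [[x [Xx Ag]]|_].
  - exists x; split; [exact Xx | apply trunc_agree, Ag].
  - exists x0; auto.
Qed.

Lemma img_trunc_subteam_retract :
  subteam (img (trunc K) X) (img (subst_valuation retract_subst) (fun _ => True)).
Proof.
  intros v [x [Xx <-]]. exists (trunc K x); split; [exact I|].
  rewrite subst_valuation_retract.
  destruct excluded_middle_informative as [_|Hn].
  - symmetry; apply trunc_agree, agree_below_trunc.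
  - exfalso; apply Hn; exists x; split; [exact Xx | apply agree_below_trunc].
Qed.

End Retraction.

Theorem theorem5p4 :
  forall (L : logic) (phi psi : form),
    inL L phi -> inL L psi ->
    (forall s : nat -> form, flat_subst L s ->
       provableL L (subst s phi) -> provableL L (subst s psi)) ->
    derivesL L phi psi.
Proof.
  intros L phi psi Hphi Hpsi H.
  split; [exact Hphi | split; [exact Hpsi |]]. intros X HX.
  destruct (classic (exists x0, X x0)) as [[x0 Hx0]|Hempty].
  2: { apply sat_empty_team. intros v Hv; apply Hempty; exists v; exact Hv. }
  destruct (subst_fixed_bound phi) as [K1 B1], (subst_fixed_bound psi) as [K2 B2].
  set (K := max K1 K2).
  assert (Bphi : forall s, fixes_below K s -> subst s phi = phi)
    by (intros s Hs; apply B1, (fixes_below_mono _ K); [lia | exact Hs]).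
  assert (Bpsi : forall s, fixes_below K s -> subst s psi = psi)
    by (intros s Hs; apply B2, (fixes_below_mono _ K); [lia | exact Hs]).
  destruct (defines_agree_below L K X) as [M HM].
  pose proof (flat_subst_retract L K X x0 M HM) as Hs.
  set (s := retract_subst L K x0 M) in Hs.
  assert (Hvalid : provableL L (subst s phi)).
  { split; [apply (proj1 Hs), Hphi|]. intro Y. rewrite sat_subst by apply Hs.
    apply (sat_subteam phi (img (trunc K) X)).
    - apply sat_img_trunc; assumption.
    - apply img_retract_subteam; assumption. }
  destruct (H s Hs Hvalid) as [_ Hpsi_valid].
  apply (sat_img_trunc K psi Bpsi).
  apply (sat_subteam psi (img (subst_valuation s) (fun _ => True))).
  - rewrite <- sat_subst by apply Hs. apply Hpsi_valid.
  - apply img_trunc_subteam_retract; assumption.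
Qed.
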